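(* Let $\alpha,\beta,\gamma$ be partitions with $\alpha_1\le 2$ and let $\Gamma$ be an LR-tableau of type $(\alpha,\beta,\gamma)$; let $x$ be the number of entries $1$ in $\Gamma$. Assume: (1) the number of entries $2$ in $\Gamma$ equals $x$ or $x-1$; (2) every row of $\Gamma$ contains at most one (non-empty) box; (3) if row $j$ contains an entry $2$ and row $i$ contains an entry $1$, then $j>i$. Then the poset $(\mathcal D_\Gamma,\le_{\rm arc})$ is isomorphic to the symmetric group $S_x$ with the Bruhat order.
   Context: For a partition $\lambda$, $\lambda'$ is its conjugate; the diagram of $\lambda$ is drawn with $\lambda'_i$ boxes in row $i$, so the $i$-th row of $\beta\setminus\gamma$ consists of the boxes in columns $\gamma'_i+1,\dots,\beta'_i$. With $\alpha_1\le2$, $\alpha'=(\alpha'_1,\alpha'_2)$. An LR-tableau of type $(\alpha,\beta,\gamma)$ is a filling of $\beta\setminus\gamma$ with $\alpha'_1$ entries $1$ and $\alpha'_2$ entries $2$, weakly increasing along rows, strictly increasing down columns, such that for each $c\ge0$ the number of entries $1$ in columns to the right of column $c$ is at least the number of entries $2$ there. Place the positive integers on a line in decreasing order from left to right. An arc is a pair $(m,n)$, $m>n$ positive integers (source $m$, target $n$); a pole at $n$ is regarded as an arc $(\infty,n)$. An arc diagram of type $(\alpha,\beta,\gamma)$ is a finite multiset of $\alpha'_2$ arcs and $\alpha'_1-\alpha'_2$ poles with, for each $i$, exactly $\beta'_i-\gamma'_i$ members having source or target $i$. It has LR type $\Gamma$ if for each $i$ the number of arcs with source $i$ equals the number of entries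 $2$ in row $i$ of $\Gamma$; $\mathcal D_\Gamma$ is the set of such diagrams. Moves: for $a>b>c>d$, (A) replaces arcs $(a,c),(b,d)$ by $(a,d),(b,c)$; (C) replaces them by $(a,b),(c,d)$; for $a>b>c$, (B) replaces arc $(a,c)$ and pole $(\infty,b)$ by arc $(a,b)$ and pole $(\infty,c)$; (D) replaces them by arc $(b,c)$ and pole $(\infty,a)$; other members unchanged. $\Delta\le_{\rm arc}\Delta'$ iff $\Delta$ is obtained from $\Delta'$ by a finite (possibly empty) sequence of moves; $\mathcal D_\Gamma$ carries the restricted order. *)

From mathcomp Require Import all_boot all_order all_fingroup.
From Stdlib Require Import Relation_Operators.

Set Implicit Arguments.
Unset Strict Implicit.
Unset Printing Implicit Defensive.

Definition is_partition (l : seq nat) : bool :=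
  sorted geq l && all (fun p => 0 < p) l.

(* conj l i = l'_i, the i-th part (1-indexed, i >= 1) of the conjugate. *)
Definition conj (l : seq nat) (i : nat) : nat := count (fun p => i <= p) l.

Definition subpart (gamma beta : seq nat) : Prop :=
  forall i, 1 <= i -> conj gamma i <= conj beta i.

(* Row i (i >= 1) of beta \ gamma consists of the boxes in columns
   gamma'_i + 1, ..., beta'_i. *)
Definition in_skew (beta gamma : seq nat) (i c : nat) : bool :=
  (1 <= i) && (conj gamma i < c) && (c <= conj beta i).

(* A filling is a function (row, column) -> entry; only its values on the
   boxes of beta \ gamma matter. *)
Definition filling := nat -> nat -> nat.

Definition row_count (beta gamma : seq nat) (T : filling) (e i : nat) : nat :=
  \sum_((conj gamma i).+1 <= c < (conj beta i).+1) (T i c == e).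

(* total number of entries e (rows beyond beta_1 = head beta are empty) *)
Definition tab_count (beta gamma : seq nat) (T : filling) (e : nat) : nat :=
  \sum_(1 <= i < (head 0 beta).+1) row_count beta gamma T e i.

Definition col_count (beta gamma : seq nat) (T : filling) (e c0 : nat) : nat :=
  \sum_(1 <= i < (head 0 beta).+1)
     \sum_((conj gamma i).+1 <= c < (conj beta i).+1 | c0 < c) (T i c == e).

(* LR-tableau of type (alpha, beta, gamma), alpha_1 <= 2, so that
   alpha' = (conj alpha 1, conj alpha 2). *)
Definition is_LR_tableau (alpha beta gamma : seq nat) (T : filling) : Prop :=
  [/\ subpart gamma beta,
      (forall i c, in_skew beta gamma i c -> T i c \in [:: 1; 2]),
      tab_count beta gamma T 1 = conj alpha 1,
      tab_count beta gamma T 2 = conj alpha 2 &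
      [/\ (forall i c c', in_skew beta gamma i c -> in_skew beta gamma i c' ->
            c <= c' -> T i c <= T i c'),
          (forall i i' c, in_skew beta gamma i c -> in_skew beta gamma i' c ->
            i < i' -> T i c < T i' c) &
          (forall c0, col_count beta gamma T 2 c0 <= col_count beta gamma T 1 c0)]].

(* (Some m, n) is the arc (m, n); (None, n) is the pole (oo, n). *)
Definition arcm := (option nat * nat)%type.

Definition valid_arc (a : arcm) : bool :=
  match a with
  | (Some m, n) => (0 < n) && (n < m)
  | (None, n) => 0 < n
  end.

Definition is_arc (a : arcm) : bool := a.1 != None.
Definition is_pole (a : arcm) : bool := a.1 == None.

Definition touches (i : nat) (a : arcm) : bool := (a.1 == Some i) || (a.2 == i).

(* A finite multiset of arcs, represented by a sequence up to permutation. *)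
Definition arc_diagram_of_type (alpha beta gamma : seq nat) (D : seq arcm) : Prop :=
  [/\ all valid_arc D,
      count is_arc D = conj alpha 2,
      count is_pole D = conj alpha 1 - conj alpha 2 &
      (forall i, 1 <= i -> count (touches i) D = conj beta i - conj gamma i)].

Definition has_LR_type (beta gamma : seq nat) (T : filling) (D : seq arcm) : Prop :=
  forall i, 1 <= i -> count (fun a => a.1 == Some i) D = row_count beta gamma T 2 i.

Definition in_DGamma (alpha beta gamma : seq nat) (T : filling) (D : seq arcm) : Prop :=
  arc_diagram_of_type alpha beta gamma D /\ has_LR_type beta gamma T D.

Definition arc_move (D' D : seq arcm) : Prop :=
  (exists (a b c d : nat) (rest : seq arcm),
      [/\ d < c, c < b, b < a,
          perm_eq D' [:: (Some a, c), (Some b, d) & rest] &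
          (perm_eq D [:: (Some a, d), (Some b, c) & rest]          (* (A) *)
           \/ perm_eq D [:: (Some a, b), (Some c, d) & rest])])   (* (C) *)
  \/
  (exists (a b c : nat) (rest : seq arcm),
      [/\ c < b, b < a,
          perm_eq D' [:: (Some a, c), (None, b) & rest] &
          (perm_eq D [:: (Some a, b), (None, c) & rest]            (* (B) *)
           \/ perm_eq D [:: (Some b, c), (None, a) & rest])]).    (* (D) *)

Definition arc_le (D D' : seq arcm) : Prop :=
  clos_refl_trans (seq arcm) (fun u v => arc_move u v \/ perm_eq u v) D' D.

Definition ninv (n : nat) (s : 'S_n) : nat :=
  #|[set p : 'I_n * 'I_n | (p.1 < p.2) && (s p.2 < s p.1)]|.

Definition bruhat_step (n : nat) (s t : 'S_n) : Prop :=
  exists i j : 'I_n, t = (s * tperm i j)%g /\ ninv s < ninv t.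

Definition bruhat_le (n : nat) (s t : 'S_n) : Prop :=
  clos_refl_trans 'S_n (@bruhat_step n) s t.

(* Let x and y be the numbers of entries 1 and 2 of the tableau.  The rows
   holding a 1 are the targets, and the rows holding a 2 together with x - y
   poles are the sources; since every 2 lies below every 1, each source is
   above each target.  Listing the sources in decreasing and the targets in
   increasing order, a diagram of D_Gamma is thus the graph of a permutation
   u of S_x.  A move (A) or (B) exchanges the targets of two sources that
   form an inversion of u, i.e. performs a Bruhat step downwards, and every
   such step is such a move.  Moves (C) and (D) strictly decrease the sum of
   the finite sources, which is the same for all diagrams of D_Gamma, so
   they never occur on a path between two of them. *)

From mathcomp Require Import all_boot all_order all_fingroup zify.
From Stdlib Require Import Relation_Operators.

Set Implicit Arguments.
Unset Strict Implicit.
Unset Printing Implicit Defensive.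

Definition inversions n (s : 'S_n) : {set 'I_n * 'I_n} :=
  [set e : 'I_n * 'I_n | (e.1 < e.2) && (s e.2 < s e.1)].

Lemma mul_tperm_image n (s : 'S_n) (p q : 'I_n) :
  (s * tperm (s p) (s q))%g = (tperm p q * s)%g.
Proof. by rewrite -tpermJ conjgE mulKVg. Qed.

Section TpermInversions.
Variables (n : nat) (s : 'S_n) (p q : 'I_n).
Hypotheses (lt_pq : p < q) (lt_spq : s p < s q).

Let t := (tperm p q * s)%g.

(* Swapping the values at [p] and [q] only reverses the relative order of the
   pairs {p, r} and {r, q} with p < r < q; such pairs are kept as they are,
   and every other pair is moved along the transposition. *)
Definition swap_pair (e : 'I_n * 'I_n) : 'I_n * 'I_n :=
  if (p < e.1 < q) || (p < e.2 < q) then e else (tperm p q e.1, tperm p q e.2).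

Lemma between_tperm (r : 'I_n) : (p < tperm p q r < q) = (p < r < q).
Proof. by case: (tpermP p q r) => [->|->|//]; rewrite !ltnn ?andbF. Qed.

Lemma swap_pairK : involutive swap_pair.
Proof.
move=> [a b]; rewrite {2}/swap_pair /=.
case: ifP => [mid|out] /=; first by rewrite /swap_pair mid.
by rewrite /swap_pair /= !between_tperm out !tpermK.
Qed.

Lemma swap_pair_inversion e :
  e \in inversions s -> swap_pair e \in inversions t :\ (p, q).
Proof.
case: e => a b; rewrite !inE /swap_pair /= => /andP [ab sba].
case: (tpermP p q a) => [Ea|Ea|Ha1 Ha2]; case: (tpermP p q b) => [Eb|Eb|Hb1 Hb2];
  subst; rewrite ?ltnn ?andbF ?andFb /= ?if_same in ab *;
  repeat match goal with |- context [if ?c then _ else _] =>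
    let E := fresh in case E: c end;
  rewrite ?xpair_eqE ?permM ?tpermL ?tpermR ?tpermK ?tpermD -?val_eqE /=;
  repeat match goal with H : ?u <> ?v |- _ => move/eqP: H; rewrite -val_eqE /= => H end;
  lia.
Qed.

Lemma ninv_tperm_lt : ninv s < ninv t.
Proof.
have pq_inv : (p, q) \in inversions t by rewrite inE /= lt_pq !permM tpermL tpermR.
rewrite -[ninv s]/#|inversions s| -[ninv t]/#|inversions t|.
rewrite [X in _ < X](cardsD1 (p, q)) pq_inv add1n ltnS.
rewrite -[#|inversions s|](card_imset _ (inv_inj swap_pairK)).
by apply/subset_leq_card/subsetP => ? /imsetP [e e_inv ->]; apply: swap_pair_inversion.
Qed.
End TpermInversions.

Lemma ninv_tperm_gt n (s : 'S_n) (p q : 'I_n) :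
  p < q -> s q < s p -> ninv (tperm p q * s)%g < ninv s.
Proof.
move=> pq sqp; have := @ninv_tperm_lt n (tperm p q * s)%g p q pq.
by rewrite !permM tpermL tpermR tpermKg; apply.
Qed.

Lemma bruhat_stepP n (s t : 'S_n) :
  bruhat_step s t <->
  exists p q : 'I_n, [/\ p < q, s p < s q & t = (tperm p q * s)%g].
Proof.
split=> [[i [j [-> lt_st]]] | [p [q [pq spq ->]]]]; last first.
  by exists (s p), (s q); rewrite mul_tperm_image; split=> //; apply: ninv_tperm_lt.
rewrite -(permKV s i) -(permKV s j) mul_tperm_image in lt_st *.
move: (s^-1 i)%g (s^-1 j)%g lt_st => p q.
wlog pq : p q / p < q => [hwlog lt_st|lt_st].
  case: (ltngtP p q) => [pq|qp|/val_inj eq_pq].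
  - exact: hwlog pq lt_st.
  - by rewrite tpermC in lt_st *; apply: hwlog qp lt_st.
  - by move: lt_st; rewrite eq_pq tperm1 mul1g ltnn.
exists p, q; split=> //.
case: (ltngtP (s p) (s q)) => // [sqp | /val_inj/perm_inj eq_pq].
- by move: (ltn_trans lt_st (ninv_tperm_gt pq sqp)); rewrite ltnn.
- by move: pq; rewrite eq_pq ltnn.
Qed.

Lemma sorted_nth_mono (T : Type) (r : rel T) (x0 : T) (s : seq T) :
  transitive r -> irreflexive r -> sorted r s ->
  {in [pred n | n < size s] &, {mono nth x0 s : i j / i < j >-> r i j}}.
Proof.
move=> r_trans r_irr r_sorted i j i_lt j_lt.
have hom := sorted_ltn_nth r_trans x0 r_sorted.
case: (ltngtP i j) => [ij|ji|->]; [exact: hom | | exact: r_irr].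
by apply/negP => rij; have := r_trans _ _ _ rij (hom _ _ j_lt i_lt ji); rewrite r_irr.
Qed.

Lemma map_nth_enum (T : Type) (x0 : T) n (s : seq T) :
  size s = n -> [seq nth x0 s k | k : 'I_n <- enum 'I_n] = s.
Proof.
move=> <-; rewrite -[LHS]/(map (nth x0 s \o val) _) map_comp val_enum_ord.
by rewrite -/(mkseq _ _) mkseq_nth.
Qed.

Lemma perm_map_enum n (u : 'S_n) (T : eqType) (f : 'I_n -> T) :
  perm_eq [seq f (u k) | k <- enum 'I_n] [seq f k | k <- enum 'I_n].
Proof.
rewrite (map_comp f u); apply/perm_map/uniq_perm; rewrite ?enum_uniq //.
  by rewrite map_inj_uniq ?enum_uniq //; apply: perm_inj.
by move=> k; rewrite mem_enum; apply/mapP; exists (u^-1 k)%g; rewrite ?mem_enum ?permKV.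
Qed.

Lemma perm_eq_nth_perm (T : eqType) (x0 : T) n (s t : seq T) :
  size s = n -> uniq s -> perm_eq t s ->
  exists sigma : 'S_n, forall j : 'I_n, nth x0 s (sigma j) = nth x0 t j.
Proof.
move=> size_s uniq_s ts.
have size_t : size t = n by rewrite (perm_size ts).
have t_in_s (j : 'I_n) : nth x0 t j \in s by rewrite -(perm_mem ts) mem_nth ?size_t.
have idx_lt (j : 'I_n) : index (nth x0 t j) s < n.
  by rewrite -[X in _ < X]size_s index_mem.
pose sigma j := Ordinal (idx_lt j).
have sigmaE j : nth x0 s (sigma j) = nth x0 t j by rewrite nth_index.
have sigma_inj : injective sigma.
  move=> j k /(congr1 (nth x0 s \o val)) /=; rewrite !sigmaE => /eqP.
  by rewrite nth_uniq ?size_t ?(perm_uniq ts) // => /eqP/val_inj.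
by exists (perm sigma_inj) => j; rewrite permE.
Qed.

Lemma perm_swap_heads (T : eqType) (a b : T) s : perm_eq [:: a, b & s] [:: b, a & s].
Proof. exact/permPl/(perm_catCA [:: a] [:: b] s). Qed.

Definition weight (D : seq arcm) : nat := sumn [seq odflt 0 e.1 | e <- D].

Lemma weight_perm D D' : perm_eq D D' -> weight D = weight D'.
Proof. by move=> /(perm_map (fun e : arcm => odflt 0 e.1))/perm_sumn. Qed.

Lemma arc_move_weight D' D : arc_move D' D -> weight D <= weight D'.
Proof.
case=> [[a [b [c [d [r [dc cb ba E' [E|E]]]]]]] | [a [b [c [r [cb ba E' [E|E]]]]]]];
  rewrite (weight_perm E) (weight_perm E') /weight /=; lia.
Qed.

Lemma arc_move_perml D0 D1 D : perm_eq D0 D1 -> arc_move D0 D -> arc_move D1 D.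
Proof.
move=> D01; case=> [[a [b [c [d [r [dc cb ba E E']]]]]] | [a [b [c [r [cb ba E E']]]]]].
- by left; exists a, b, c, d, r; rewrite -(permPl D01).
- by right; exists a, b, c, r; rewrite -(permPl D01).
Qed.

Lemma arc_le_weight D D' : arc_le D D' -> weight D <= weight D'.
Proof.
elim=> [D0 D1 [/arc_move_weight // | /weight_perm -> //] | // |].
by move=> D0 D1 D2 _ le10 _ le21; apply: leq_trans le21 le10.
Qed.

(* [None] stands for the pole, whose source oo lies above every finite one. *)
Definition src_gt (o o' : option nat) : bool :=
  match o, o' with
  | None, Some _ => true
  | Some m, Some m' => m' < m
  | _, _ => false
  end.

Lemma src_gt_trans : transitive src_gt.
Proof. by case=> [b|] [a|] [c|] //= ba cb; apply: ltn_trans cb ba. Qed.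

Lemma src_gt_irr : irreflexive src_gt.
Proof. by case=> //= m; rewrite ltnn. Qed.

Section Diagram.
Variables (x : nat) (S : seq (option nat)) (L : seq nat).
Hypotheses (size_S : size S = x) (size_L : size L = x).
Hypotheses (sorted_S : sorted src_gt S) (sorted_L : sorted ltn L).
Hypothesis S_above_L : forall o n, o \in S -> n \in L -> src_gt o (Some n).

Definition edge (k j : 'I_x) : arcm := (nth None S k, nth 0 L j).

Definition diagram (u : 'S_x) : seq arcm := [seq edge k (u k) | k <- enum 'I_x].

Lemma nth_S_gt (i j : 'I_x) : src_gt (nth None S i) (nth None S j) = (i < j).
Proof. by apply: (sorted_nth_mono _ src_gt_trans src_gt_irr sorted_S); rewrite inE size_S. Qed.

Lemma nth_L_lt (i j : 'I_x) : (nth 0 L i < nth 0 L j) = (i < j).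
Proof. by apply: (sorted_nth_mono _ ltn_trans ltnn sorted_L); rewrite inE size_L. Qed.

Lemma uniq_S : uniq S.
Proof. exact: (sorted_uniq src_gt_trans src_gt_irr sorted_S). Qed.

Lemma uniq_L : uniq L.
Proof. exact: (sorted_uniq ltn_trans ltnn sorted_L). Qed.

Lemma map_fst_diagram u : map fst (diagram u) = S.
Proof. by rewrite -map_comp; apply: map_nth_enum. Qed.

Lemma perm_map_snd_diagram u : perm_eq (map snd (diagram u)) L.
Proof.
rewrite -map_comp; apply: perm_trans (perm_map_enum u (fun k => nth 0 L k)) _.
by rewrite map_nth_enum.
Qed.

Lemma weight_diagram u v : weight (diagram u) = weight (diagram v).
Proof. by rewrite /weight !(map_comp (odflt 0) fst) !map_fst_diagram. Qed.

Lemma diagram_inj u v : perm_eq (diagram u) (diagram v) -> u = v.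
Proof.
move=> Duv; apply/permP => k.
have /mapP [k' _ [/eqP Sk /eqP Lk]] : edge k (u k) \in diagram v.
  by rewrite -(perm_mem Duv); apply: map_f; rewrite mem_enum.
move: Sk; rewrite nth_uniq ?size_S ?uniq_S // => /eqP/val_inj kk'.
by move: Lk; rewrite kk' nth_uniq ?size_L ?uniq_L // => /eqP/val_inj.
Qed.

Lemma diagram_split u (p q : 'I_x) : p != q ->
  exists r, perm_eq (diagram u) [:: edge p (u p), edge q (u q) & r] /\
            perm_eq (diagram (tperm p q * u)) [:: edge p (u q), edge q (u p) & r].
Proof.
move=> pq; pose ks := [seq k <- enum 'I_x | (k != p) && (k != q)].
have enumE : perm_eq (enum 'I_x) [:: p, q & ks].
  apply: uniq_perm; rewrite ?enum_uniq //=.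
    by rewrite !inE !mem_filter !eqxx !andbF (negbTE pq) filter_uniq ?enum_uniq.
  by move=> k; rewrite mem_enum !inE mem_filter mem_enum andbT; case: (k =P p); case: (k =P q).
exists [seq edge k (u k) | k <- ks]; split; first exact: perm_map _ enumE.
apply: perm_trans (perm_map _ enumE) _; rewrite /= !permM tpermL tpermR.
suff -> : [seq edge k ((tperm p q * u)%g k) | k <- ks] = [seq edge k (u k) | k <- ks] by [].
apply/eq_in_map => k; rewrite mem_filter permM => /andP [/andP [kp kq] _].
by rewrite tpermD // eq_sym.
Qed.

Lemma diagram_swap_targets u (p q : 'I_x) r : p != q ->
  perm_eq (diagram u) [:: edge p (u p), edge q (u q) & r] ->
  perm_eq (diagram (tperm p q * u)) [:: edge p (u q), edge q (u p) & r].
Proof.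
move=> pq Du; have [r' [Du' Dv']] := diagram_split u pq.
move: Du'; rewrite (permPl Du) !perm_cons => rr'.
by rewrite (permPl Dv') !perm_cons perm_sym.
Qed.

Lemma arc_move_tperm (u : 'S_x) (p q : 'I_x) : p < q -> u q < u p ->
  arc_move (diagram u) (diagram (tperm p q * u)).
Proof.
move=> pq uqp.
have S_pq : src_gt (nth None S p) (nth None S q) by rewrite nth_S_gt.
have L_qp : nth 0 L (u q) < nth 0 L (u p) by rewrite nth_L_lt.
have Sq_above : src_gt (nth None S q) (Some (nth 0 L (u p))).
  by apply: S_above_L; rewrite mem_nth ?size_S ?size_L.
case Sp: (nth None S p) S_pq => [a|]; case Sq: (nth None S q) Sq_above => [b|] //= ba bc.
- have [r [Du Dv]] := diagram_split u (negbT (ltn_eqF pq)).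
  rewrite /edge Sp Sq in Du Dv.
  by left; exists a, b, (nth 0 L (u p)), (nth 0 L (u q)), r; split=> //; left.
- have [r [Du Dv]] := diagram_split u (negbT (gtn_eqF pq)).
  rewrite /edge Sp Sq tpermC in Du Dv.
  by right; exists b, (nth 0 L (u p)), (nth 0 L (u q)), r; split=> //; left.
Qed.

Lemma bruhat_step_swap_targets (u : 'S_x) (p q : 'I_x) r : p < q -> u q < u p ->
  perm_eq (diagram u) [:: edge p (u p), edge q (u q) & r] ->
  exists2 s, bruhat_step s u & perm_eq [:: edge p (u q), edge q (u p) & r] (diagram s).
Proof.
move=> pq uqp Du; exists (tperm p q * u)%g.
  by apply/bruhat_stepP; exists p, q; rewrite !permM tpermL tpermR tpermKg.
by rewrite perm_sym; apply: diagram_swap_targets Du; rewrite neq_ltn pq.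
Qed.

Lemma diagram_move (u : 'S_x) D : arc_move (diagram u) D ->
  weight D < weight (diagram u) \/ exists2 s, bruhat_step s u & perm_eq D (diagram s).
Proof.
have edge_of e : e \in diagram u -> exists k, e = edge k (u k).
  by case/mapP => k _ ->; exists k.
case=> [[a [b [c [d [r [dc cb ba Du [DA|DC]]]]]]] | [a [b [c [r [cb ba Du [DB|DD]]]]]]].
- have /edge_of [p [Sp Lp]] : (Some a, c) \in diagram u by rewrite (perm_mem Du) mem_head.
  have /edge_of [q [Sq Lq]] : (Some b, d) \in diagram u by rewrite (perm_mem Du) !inE eqxx orbT.
  have pq : p < q by rewrite -nth_S_gt -Sp -Sq.
  have uqp : u q < u p by rewrite -nth_L_lt -Lp -Lq.
  have [|s st Ds] := bruhat_step_swap_targets pq uqp (r := r).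
    by rewrite /edge -Sp -Lp -Sq -Lq.
  by right; exists s; rewrite // (permPl DA); move: Ds; rewrite /edge -Sp -Lp -Sq -Lq.
- by left; rewrite (weight_perm DC) (weight_perm Du) /weight /=; lia.
- have /edge_of [p [Sp Lp]] : (None, b) \in diagram u by rewrite (perm_mem Du) !inE eqxx orbT.
  have /edge_of [q [Sq Lq]] : (Some a, c) \in diagram u by rewrite (perm_mem Du) mem_head.
  have pq : p < q by rewrite -nth_S_gt -Sp -Sq.
  have uqp : u q < u p by rewrite -nth_L_lt -Lp -Lq.
  have [|s st Ds] := bruhat_step_swap_targets pq uqp (r := r).
    by rewrite /edge -Sp -Lp -Sq -Lq (permPl Du) perm_swap_heads.
  right; exists s; rewrite // (permPl DB) -(permPl (perm_swap_heads _ _ _)).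
  by move: Ds; rewrite /edge -Sp -Lp -Sq -Lq.
- by left; rewrite (weight_perm DD) (weight_perm Du) /weight /=; lia.
Qed.

Lemma bruhat_step_arc_move s t : bruhat_step s t -> arc_move (diagram t) (diagram s).
Proof.
case/bruhat_stepP => p [q [pq spq ->]].
have := @arc_move_tperm (tperm p q * s)%g p q pq; rewrite tpermKg; apply.
by rewrite !permM tpermL tpermR.
Qed.

Lemma bruhat_le_arc_le s t : bruhat_le s t -> arc_le (diagram s) (diagram t).
Proof.
elim=> [s' t' /bruhat_step_arc_move st | s' | s1 s2 s3 _ le12 _ le23].
- exact/rt_step/or_introl.
- exact: rt_refl.
- exact: rt_trans le23 le12.
Qed.

(* The weight cannot drop along a path that starts and ends in diagrams of the
   same weight, so only moves (A) and (B) occur, and these are Bruhat steps. *)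
Lemma arc_le_diagram D D0 t : arc_le D D0 -> perm_eq D0 (diagram t) ->
  weight D = weight D0 -> exists2 s, perm_eq D (diagram s) & bruhat_le s t.
Proof.
move=> le_D; elim: le_D t => {D0 D} [D0 D step | D | D0 D1 D le01 IH01 le1 IH1] t Dt wD.
- case: step => [/(arc_move_perml Dt)/diagram_move [] | DD0].
  + by rewrite -(weight_perm Dt) -wD ltnn.
  + by case=> s st Ds; exists s => //; apply: rt_step.
  + by exists t; [rewrite -(permPl DD0) | apply: rt_refl].
- by exists t => //; apply: rt_refl.
- have w1 : weight D1 = weight D0.
    by apply/eqP; rewrite eqn_leq (arc_le_weight le01) -wD (arc_le_weight le1).
  have [s1 Ds1 le_s1t] := IH01 t Dt w1.
  have [s Ds le_ss1] := IH1 s1 Ds1 (etrans wD (esym w1)).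
  by exists s => //; apply: rt_trans le_ss1 le_s1t.
Qed.

Lemma arc_le_diagramE s t : arc_le (diagram s) (diagram t) <-> bruhat_le s t.
Proof.
split=> [le_st | /bruhat_le_arc_le //].
have [s' /diagram_inj -> //] := arc_le_diagram le_st (perm_refl _) (weight_diagram s t).
Qed.

Lemma diagram_surj D : perm_eq (map fst D) S -> perm_eq (map snd D) L ->
  exists u, perm_eq D (diagram u).
Proof.
move=> DS DL.
have [sigma sigmaE] := perm_eq_nth_perm None size_S uniq_S DS.
have [tau tauE] := perm_eq_nth_perm 0 size_L uniq_L DL.
have size_D : size D = x by rewrite -(size_map fst) (perm_size DS).
pose u := (sigma^-1 * tau)%g; exists u.
suff -> : D = [seq edge (sigma k) (u (sigma k)) | k <- enum 'I_x] by apply: perm_map_enum.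
rewrite -[LHS](map_nth_enum (None, 0) size_D); apply/eq_map => k.
by rewrite permM permK /edge sigmaE tauE !(nth_map (None, 0)) ?size_D // -surjective_pairing.
Qed.
End Diagram.

Lemma valid_arcE (a : arcm) : valid_arc a = (0 < a.2) && src_gt a.1 (Some a.2).
Proof. by case: a => [[m|] n] //=; rewrite andbT. Qed.

Lemma count_touches0 D : all valid_arc D -> count (touches 0) D = 0.
Proof.
move=> /allP valid_D; rewrite (@eq_in_count _ _ pred0) ?count_pred0 //.
move=> [o n] /valid_D; rewrite valid_arcE /touches /= => /andP [n_pos above].
apply/norP; split.
- by apply/eqP => o0; move: above; rewrite o0 /=; lia.
- by apply/eqP => n0; lia.
Qed.

Lemma count_touches D i : all valid_arc D ->
  count (touches i) D = count (fun a => a.1 == Some i) D + count (fun a => a.2 == i) D.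
Proof.
move=> /allP valid_D; rewrite -count_predUI [X in _ + X](@eq_in_count _ _ pred0).
  by rewrite count_pred0 addn0; apply: eq_count.
move=> [o n] /valid_D; rewrite valid_arcE /= => /andP [_ n_below].
by apply/negP => /andP [/eqP o_i /eqP n_i]; move: n_below; rewrite o_i n_i /= ltnn.
Qed.

Lemma conj_gt0_le_head (l : seq nat) i : sorted geq l -> 0 < conj l i -> i <= head 0 l.
Proof.
rewrite /conj -has_count; case: l => [//|h t] srt /hasP [p].
rewrite inE => /orP [/eqP -> // | pt ip].
have geq_trans : transitive geq by move=> ? ? ? ba cb; apply: leq_trans cb ba.
exact: leq_trans ip (allP (order_path_min geq_trans srt) p pt).
Qed.

Section Tableau.
Variables (alpha beta gamma : seq nat) (T : filling).
Hypothesis beta_part : is_partition beta.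
Hypothesis LR : is_LR_tableau alpha beta gamma T.
Hypothesis ones_twos : tab_count beta gamma T 2 = tab_count beta gamma T 1 \/
  (tab_count beta gamma T 2).+1 = tab_count beta gamma T 1.
Hypothesis one_box : forall i, 1 <= i -> conj beta i - conj gamma i <= 1.
Hypothesis twos_below : forall i j,
  0 < row_count beta gamma T 2 j -> 0 < row_count beta gamma T 1 i -> i < j.

Local Notation ones := (tab_count beta gamma T 1).
Local Notation twos := (tab_count beta gamma T 2).

(* By [one_box], a nonempty row [i] consists of the single box in column
   [conj beta i]. *)
Definition has_entry (e i : nat) : bool :=
  (conj gamma i < conj beta i) && (T i (conj beta i) == e).

Definition rows_with (e : nat) : seq nat := [seq i <- iota 1 (head 0 beta) | has_entry e i].

Definition sources : seq (option nat) :=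
  nseq (ones - twos) None ++ rev (map Some (rows_with 2)).

Lemma nonempty_row_width i : 1 <= i -> conj gamma i < conj beta i ->
  conj beta i = (conj gamma i).+1.
Proof.
move=> i_pos nonempty; have := one_box i_pos; rewrite leq_subLR addn1 => le_beta.
by apply/eqP; rewrite eqn_leq le_beta nonempty.
Qed.

Lemma row_countE e i : 1 <= i -> row_count beta gamma T e i = has_entry e i.
Proof.
move=> i_pos; rewrite /row_count /has_entry; case: ltnP => [nonempty | empty].
- by rewrite (nonempty_row_width i_pos nonempty) big_nat1.
- by rewrite big_geq.
Qed.

Lemma size_rows_with e : size (rows_with e) = tab_count beta gamma T e.
Proof.
rewrite /tab_count (eq_big_nat _ _ (F2 := fun i => (has_entry e i : nat))); last first.
  by move=> i /andP [i_pos _]; rewrite row_countE.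
rewrite -[RHS](big_mkcond _ (fun i => 1)) sum1_count size_filter.
by rewrite /index_iota subSS subn0.
Qed.

Lemma mem_rows_with e i : 1 <= i -> (i \in rows_with e) = has_entry e i.
Proof.
move=> i_pos; rewrite mem_filter mem_iota.
case entry: (has_entry e i) => //=.
have /andP [nonempty _] : has_entry e i := entry.
have := conj_gt0_le_head (proj1 (andP beta_part)) (leq_ltn_trans (leq0n _) nonempty).
by rewrite i_pos add1n ltnS => ->.
Qed.

Lemma rows_with_pos e i : i \in rows_with e -> 0 < i.
Proof. by rewrite mem_filter mem_iota => /and3P []. Qed.

Lemma sorted_rows_with e : sorted ltn (rows_with e).
Proof. exact: (sorted_filter ltn_trans _ (iota_ltn_sorted _ _)). Qed.

Lemma uniq_rows_with e : uniq (rows_with e).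
Proof. exact: (sorted_uniq ltn_trans ltnn (sorted_rows_with e)). Qed.

Lemma row_widthE i : 1 <= i ->
  conj beta i - conj gamma i = (i \in rows_with 1) + (i \in rows_with 2).
Proof.
move=> i_pos; rewrite !mem_rows_with // /has_entry; case: ltnP => [nonempty | empty] /=.
- have [_ entries _ _ _] := LR.
  have := entries i (conj beta i); rewrite /in_skew i_pos nonempty leqnn !inE => /(_ isT).
  by rewrite (nonempty_row_width i_pos nonempty) subSnn; case/orP => /eqP ->.
- by apply/eqP; rewrite subn_eq0.
Qed.

Lemma twos_below_ones m n : m \in rows_with 2 -> n \in rows_with 1 -> n < m.
Proof.
move=> m2 n1; apply: twos_below.
- by rewrite row_countE -?mem_rows_with ?m2 ?(rows_with_pos m2).
- by rewrite row_countE -?mem_rows_with ?n1 ?(rows_with_pos n1).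
Qed.

Lemma twos_le_ones : twos <= ones /\ ones - twos <= 1.
Proof. by case: ones_twos => <-; rewrite ?subnn ?subSnn ?leqnSn. Qed.

Lemma size_sources : size sources = ones.
Proof.
by rewrite size_cat size_nseq size_rev size_map size_rows_with subnK // (proj1 twos_le_ones).
Qed.

Lemma sorted_sources : sorted src_gt sources.
Proof.
have sorted_finite : sorted src_gt (map Some (rev (rows_with 2))).
  by rewrite sorted_map rev_sorted; apply: sorted_rows_with.
have [_] := twos_le_ones; rewrite /sources -map_rev.
by case: (ones - twos) => [|[|//]] _ //=; case: (rev _) sorted_finite.
Qed.

Lemma count_mem_sources_Some m : count_mem (Some m) sources = (m \in rows_with 2).
Proof.
by rewrite count_cat count_nseq mul0n count_rev count_map -count_uniq_mem ?uniq_rows_with.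
Qed.

Lemma count_mem_sources_None : count_mem None sources = ones - twos.
Proof.
rewrite count_cat count_nseq mul1n count_rev count_map.
by rewrite (@eq_count _ _ pred0) ?count_pred0 ?addn0.
Qed.

Lemma count_arcs_sources : count (predC1 None) sources = twos.
Proof.
rewrite count_cat count_nseq mul0n count_rev count_map.
by rewrite (@eq_count _ _ predT) // count_predT size_rows_with.
Qed.

Lemma sources_above o n : o \in sources -> n \in rows_with 1 -> src_gt o (Some n).
Proof.
rewrite mem_cat mem_nseq mem_rev => /orP [/andP [_ /eqP -> //] | /mapP [m m2 ->]] n1.
exact: twos_below_ones.
Qed.

Lemma endpoints_in_DGamma D :
  perm_eq (map fst D) sources -> perm_eq (map snd D) (rows_with 1) ->
  in_DGamma alpha beta gamma T D.
Proof.
move=> fstD sndD; have [_ _ ones_alpha twos_alpha _] := LR.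
have count_fst P : count (P \o fst) D = count P sources.
  by rewrite -count_map (seq.permP fstD).
have count_snd P : count (P \o snd) D = count P (rows_with 1).
  by rewrite -count_map (seq.permP sndD).
have count_src i : count (fun a => a.1 == Some i) D = (i \in rows_with 2).
  by rewrite (count_fst (pred1 (Some i))) count_mem_sources_Some.
have valid_D : all valid_arc D.
  apply/allP => -[o n] oD; rewrite valid_arcE /=.
  have o_src : o \in sources by rewrite -(perm_mem fstD); apply: (map_f fst oD).
  have n_L1 : n \in rows_with 1 by rewrite -(perm_mem sndD); apply: (map_f snd oD).
  by rewrite (rows_with_pos n_L1) sources_above.
split; first split => //.
- by rewrite -twos_alpha (count_fst (predC1 None)) count_arcs_sources.
- by rewrite -ones_alpha -twos_alpha (count_fst (pred1 None)) count_mem_sources_None.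
- move=> i i_pos; rewrite count_touches // count_src (count_snd (pred1 i)).
  by rewrite count_uniq_mem ?uniq_rows_with // row_widthE // addnC.
- by move=> i i_pos; rewrite count_src row_countE ?mem_rows_with.
Qed.

Lemma in_DGamma_endpoints D : in_DGamma alpha beta gamma T D ->
  perm_eq (map fst D) sources /\ perm_eq (map snd D) (rows_with 1).
Proof.
case=> [[valid_D arcs poles touches_D] srcs]; have [_ _ ones_alpha twos_alpha _] := LR.
have /esym/eqP := count_touches 0 valid_D; rewrite count_touches0 // addn_eq0.
move=> /andP [/eqP src0 /eqP tgt0].
have notin0 e : 0 \notin rows_with e by apply/negP => /rows_with_pos.
split; apply/allP => z _; apply/eqP; rewrite count_map.
- case: z => [[|i]|].
  + by rewrite count_mem_sources_Some (negbTE (notin0 2)); exact: src0.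
  + by rewrite count_mem_sources_Some mem_rows_with // -row_countE // -srcs.
  + transitivity (ones - twos); last exact/esym/count_mem_sources_None.
    by rewrite ones_alpha twos_alpha -poles; apply: eq_count.
- case: z => [|i].
  + by rewrite count_uniq_mem ?uniq_rows_with // (negbTE (notin0 1)); exact: tgt0.
  + rewrite count_uniq_mem ?uniq_rows_with //.
    have := touches_D i.+1 isT; rewrite count_touches // srcs // row_countE // row_widthE //.
    rewrite -mem_rows_with // => /eqP; rewrite addnC eqn_add2r => /eqP <-.
    exact: eq_count.
Qed.

Lemma in_DGammaE D : in_DGamma alpha beta gamma T D <->
  perm_eq (map fst D) sources /\ perm_eq (map snd D) (rows_with 1).
Proof. by split => [/in_DGamma_endpoints | [] /endpoints_in_DGamma]. Qed.

End Tableau.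

Theorem mainTheorem5 (alpha beta gamma : seq nat) (T : filling) :
  is_partition alpha -> is_partition beta -> is_partition gamma ->
  head 0 alpha <= 2 ->
  is_LR_tableau alpha beta gamma T ->
  (tab_count beta gamma T 2 = tab_count beta gamma T 1 \/
   (tab_count beta gamma T 2).+1 = tab_count beta gamma T 1) ->
  (forall i, 1 <= i -> conj beta i - conj gamma i <= 1) ->
  (forall i j, 0 < row_count beta gamma T 2 j -> 0 < row_count beta gamma T 1 i ->
     i < j) ->
  exists f : 'S_(tab_count beta gamma T 1) -> seq arcm,
    [/\ (forall s, in_DGamma alpha beta gamma T (f s)),
        (forall D, in_DGamma alpha beta gamma T D -> exists s, perm_eq D (f s)) &
        (forall s t, arc_le (f s) (f t) <-> bruhat_le s t)].
Proof.
move=> _ beta_part _ _ LR ones_twos one_box twos_below.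
have DGammaE := in_DGammaE beta_part LR one_box twos_below.
have size_S := size_sources ones_twos one_box.
have size_L := size_rows_with T one_box 1.
have sorted_S := sorted_sources ones_twos.
have sorted_L := sorted_rows_with beta gamma T 1.
have above := sources_above beta_part one_box twos_below.
exists (diagram (sources beta gamma T) (rows_with beta gamma T 1)); split.
- move=> u; apply/DGammaE; rewrite map_fst_diagram //; split=> //.
  exact: perm_map_snd_diagram.
- by move=> D /DGammaE [fstD sndD]; apply: diagram_surj fstD sndD.
- by move=> s t; apply: arc_le_diagramE.
Qed.
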